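(* Let $\mathcal{N},\mathcal{N}':\mathcal{L}(A)\to\mathcal{L}(B)$ be quantum channels with the same Choi–Kraus space, $\mathcal{K}(\mathcal{N})=\mathcal{K}(\mathcal{N}')$. Then a quantum feedback-assisted code is zero-error for $\mathcal{N}$ if and only if it is zero-error for $\mathcal{N}'$. Consequently the maximal number $M_f(n;K)$ of messages of a zero-error feedback-assisted code with $n$ channel uses depends only on $K=\mathcal{K}(\mathcal{N})$, and the quantum feedback-assisted zero-error capacity $$C_{0EF}(K)=\lim_{n\to\infty}\frac1n\log M_f(n;K)=\sup_n\frac1n\log M_f(n;K)$$ (the limit exists and equals the supremum) is a function of $K$ only.
   Context: $A,B$ are finite-dimensional Hilbert spaces; $\mathcal{L}(A)$ denotes linear operators on $A$ and $\mathcal{L}(A\to B)$ linear maps $A\to B$. A quantum channel is a completely positive trace-preserving map $\mathcal{N}(\rho)=\sum_j E_j\rho E_j^\dagger$ with $E_j\in\mathcal{L}(A\to B)$, $\sum_jE_j^\dagger E_j=\mathbb{1}$; its Choi–Kraus space is $\mathcal{K}(\mathcal{N})=\mathrm{span}\{E_j\}$ (independent of the Kraus decomposition). A quantum feedback-assisted code with $n$ channel uses and $M$ messages consists of a pure state $|\phi\rangle\in X_0\otimes Y_0$ and, for $t=1,\dots,n$, isometries $U^{(m)}_t:X_{t-1}\otimes F_{t-1}\to A_t\otimes X_t$ ($m=1,\dots,M$) and $W_t:Y_{t-1}\otimes B_t\to F_t\otimes Y_t$, where $A_t\cong A$, $B_t\cong B$, all $X_t,Y_t,F_t$ are finite-dimensional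 and $F_0=F_n=\mathbb{C}$. For message $m$, with channel Kraus operators $E_j$ applied $A_t\to B_t$ in round $t$, Bob's final state on $Y_n$ is $\rho^{(m)}=\sum_{j_1,\dots,j_n}\mathrm{tr}_{X_n}\big(Q|\phi\rangle\langle\phi|Q^\dagger\big)$ with $Q=W_nE_{j_n}U^{(m)}_n\cdots W_1E_{j_1}U^{(m)}_1$. The code is zero-error for $\mathcal{N}$ if the states $\rho^{(m)}$, $m=1,\dots,M$, have pairwise orthogonal supports. Logarithms are base 2. *)

From HB Require Import structures.
From mathcomp Require Import all_boot all_order all_algebra.
From mathcomp Require Import mxtens.
From mathcomp Require Import all_classical all_reals all_analysis.

Set Implicit Arguments.
Unset Strict Implicit.
Unset Printing Implicit Defensive.

Import Order.TTheory GRing.Theory Num.Theory.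
Local Open Scope ring_scope.

Section QDefs.
Variable C : numClosedFieldType.

Definition adjmx m n (A : 'M[C]_(m, n)) : 'M[C]_(n, m) := (map_mx (fun z => z^*) A)^T.

Definition isometry m n (V : 'M[C]_(m, n)) : Prop := adjmx V *m V = 1%:M.

(* A quantum channel L(A) -> L(B) (dim A = dA, dim B = dB) given by Kraus
   operators E_j : A -> B, j < k, with sum_j E_j^dagger E_j = 1. *)
Definition is_channel dA dB k (E : 'I_k -> 'M[C]_(dB, dA)) : Prop :=
  \sum_(j < k) adjmx (E j) *m E j = 1%:M.

(* The Choi-Kraus space span{E_j}, as a row space (rows = vectorised E_j). *)
Definition kraus_mx dA dB k (E : 'I_k -> 'M[C]_(dB, dA)) : 'M[C]_(k, dB * dA) :=
  \matrix_(j < k) mxvec (E j).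

(* Matrix of the index map g (a permutation of tensor factors when g is a bijection). *)
Definition idx_mx m n (g : 'I_n -> 'I_m) : 'M[C]_(m, n) :=
  \matrix_(i, j) (i == g j)%:R.

(* (B (x) X) (x) Y  -->  X (x) (Y (x) B) *)
Definition reorder_idx b x y (k : 'I_(b * x * y)) : 'I_(x * (y * b)) :=
  let: (bx, j) := mxtens_unindex k in
  let: (i, l) := mxtens_unindex bx in
  mxtens_index (l, mxtens_index (j, i)).

(* X (x) (F (x) Y)  -->  (X (x) F) (x) Y *)
Definition reassoc_idx x f y (k : 'I_(x * (f * y))) : 'I_(x * f * y) :=
  let: (i, fy) := mxtens_unindex k in
  let: (l, j) := mxtens_unindex fy in
  mxtens_index (mxtens_index (i, l), j).

Definition ptrace1 a b (rho : 'M[C]_(a * b)) : 'M[C]_b :=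
  \matrix_(i, j) \sum_(l < a) rho (mxtens_index (l, i)) (mxtens_index (l, j)).

Definition orth_supports m (A B : 'M[C]_m) : Prop :=
  forall u v : 'cV[C]_m, adjmx (A *m u) *m (B *m v) = 0.

(* Round t+1 (t = 0..n-1) uses  U m t : X_t (x) F_t -> A (x) X_(t+1)  and
   W t : Y_t (x) B -> F_(t+1) (x) Y_(t+1).  Dimensions: xd t = dim X_t,
   yd t = dim Y_t, fd t = dim F_t, with F_0 = F_n = C.  The initial pure state
   |phi> lives in X_0 (x) F_0 (x) Y_0 = X_0 (x) Y_0 (since dim F_0 = 1). *)
Record fcode (dA dB n M : nat) := FCode {
  xd : nat -> nat;
  yd : nat -> nat;
  fd : nat -> nat;
  fd0 : fd 0%N = 1%N;
  fdn : fd n = 1%N;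
  phi : 'cV[C]_(xd 0%N * fd 0%N * yd 0%N);
  phi_unit : isometry phi;
  encU : 'I_M -> forall t : nat, 'M[C]_(dA * xd t.+1, xd t * fd t);
  encU_iso : forall m t, (t < n)%N -> isometry (encU m t);
  decW : forall t : nat, 'M[C]_(fd t.+1 * yd t.+1, yd t * dB);
  decW_iso : forall t, (t < n)%N -> isometry (decW t)
}.

Section Run.
Variables (dA dB n M : nat) (c : fcode dA dB n M) (m : 'I_M).

(* One round t+1, with Kraus operator Ej applied A -> B; global state ordered
   as (X_t (x) F_t) (x) Y_t. *)
Definition round (t : nat) (Ej : 'M[C]_(dB, dA))
    (v : 'cV[C]_(xd c t * fd c t * yd c t)) :
    'cV[C]_(xd c t.+1 * fd c t.+1 * yd c t.+1) :=
  idx_mx (@reassoc_idx (xd c t.+1) (fd c t.+1) (yd c t.+1))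
  *m ((1%:M : 'M[C]_(xd c t.+1)) *t decW c t)
  *m idx_mx (@reorder_idx dB (xd c t.+1) (yd c t))
  *m ((Ej *t (1%:M : 'M[C]_(xd c t.+1))) *t (1%:M : 'M[C]_(yd c t)))
  *m ((encU c m t *t (1%:M : 'M[C]_(yd c t))) *m v).

(* Q |phi> after t rounds, for Kraus operators Es 0, Es 1, ... in rounds 1, 2, ... *)
Fixpoint branch (Es : nat -> 'M[C]_(dB, dA)) (t : nat) :
    'cV[C]_(xd c t * fd c t * yd c t) :=
  match t with
  | 0%N => phi c
  | t'.+1 => @round t' (Es t') (branch Es t')
  end.

Definition kraus_at k (E : 'I_k -> 'M[C]_(dB, dA)) (js : {ffun 'I_n -> 'I_k})
    (t : nat) : 'M[C]_(dB, dA) :=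
  if @insub nat (fun i => (i < n)%N) 'I_n t is Some i then E (js i) else 0.

(* Bob's final state rho^(m) on Y_n:
   sum_{j_1..j_n} tr_{X_n (x) F_n} (Q |phi><phi| Q^dagger)  (dim F_n = 1). *)
Definition final_state k (E : 'I_k -> 'M[C]_(dB, dA)) : 'M[C]_(yd c n) :=
  \sum_(js : {ffun 'I_n -> 'I_k})
     ptrace1 (branch (kraus_at E js) n *m adjmx (branch (kraus_at E js) n)).

End Run.

Definition zero_error dA dB n M k (E : 'I_k -> 'M[C]_(dB, dA))
    (c : fcode dA dB n M) : Prop :=
  forall m m' : 'I_M, m != m' -> orth_supports (final_state c m E) (final_state c m' E).

End QDefs.

Local Open Scope ereal_scope.

(* base-2 logarithm on extended reals, with log 0 = -oo, log +oo = +oo *)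
Definition elog2 (R : realType) (x : \bar R) : \bar R :=
  match x with
  | r%:E => if (0 < r)%R then (ln r / ln 2)%:E else -oo
  | +oo => +oo
  | -oo => -oo
  end.

Definition Mf (R : realType) (C : numClosedFieldType) dA dB k
    (E : 'I_k -> 'M[C]_(dB, dA)) (n : nat) : \bar R :=
  ereal_sup [set (M%:R)%:E | M in [set M : nat |
               exists c : fcode C dA dB n M, zero_error E c]].

(* (1/n) log M_f(n; N) for n = N'.+1 >= 1 (sequence indexed from n = 1). *)
Definition rate_seq (R : realType) (C : numClosedFieldType) dA dB k
    (E : 'I_k -> 'M[C]_(dB, dA)) (N' : nat) : \bar R :=
  elog2 (Mf R E N'.+1) * ((N'.+1)%:R^-1)%:E.

Definition C0EF (R : realType) (C : numClosedFieldType) dA dB k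
    (E : 'I_k -> 'M[C]_(dB, dA)) : \bar R :=
  ereal_sup (range (rate_seq R E)).

From Pilot Require Import Defs.
From HB Require Import structures.
From mathcomp Require Import all_boot all_order all_algebra.
From mathcomp Require Import mxtens.
From mathcomp Require Import all_classical all_reals all_analysis.
From mathcomp Require Import lra.

(* The final state of message m is a sum of rank-one operators |w><w|, one for
   each choice of Kraus operators in the n rounds and each basis vector l of
   Alice's final register, w being the corresponding slice of the global pure
   state.  Two such sums have orthogonal supports iff all cross inner products
   <w, w'> vanish.  Each slice is linear in the Kraus operator applied in each
   round, so these inner products are sesquilinear in the choices; if they
   vanish for the Kraus operators of N they vanish for all choices in the span
   K(N) = K(N').  Hence zero-error codes, M_f(n; K) and the rates depend on K
   only.  Running a code for n1 uses and then one for n2 uses gives a code for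
   n1 + n2 uses with M1 M2 messages whose branches are product states, so it is
   again zero-error: log M_f(n; K) is superadditive, and Fekete's argument shows
   that the rates converge to their supremum. *)

Set Implicit Arguments.
Unset Strict Implicit.
Unset Printing Implicit Defensive.
Import Order.TTheory GRing.Theory Num.Theory.
Local Open Scope ring_scope.

(** * Orthogonality of sums of rank-one operators *)

Section Adjoint.
Variable C : numClosedFieldType.

Lemma adjmxE m n (A : 'M[C]_(m, n)) i j : adjmx A i j = (A j i)^*.
Proof. by rewrite /adjmx !mxE. Qed.

Lemma adjmxK m n (A : 'M[C]_(m, n)) : adjmx (adjmx A) = A.
Proof. by apply/matrixP=> i j; rewrite !adjmxE conjCK. Qed.

Lemma adjmxM m n p (A : 'M[C]_(m, n)) (B : 'M[C]_(n, p)) :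
  adjmx (A *m B) = adjmx B *m adjmx A.
Proof.
apply/matrixP=> i j; rewrite adjmxE !mxE rmorph_sum; apply: eq_bigr=> k _.
by rewrite !adjmxE rmorphM mulrC.
Qed.

Lemma adjmx0 m n : adjmx (0 : 'M[C]_(m, n)) = 0.
Proof. by apply/matrixP=> i j; rewrite !mxE /= rmorph0. Qed.

Lemma adjmx_sum m n (I : finType) (F : I -> 'M[C]_(m, n)) :
  adjmx (\sum_i F i) = \sum_i adjmx (F i).
Proof.
elim/big_rec2: _ => [|i x y _ <-]; first exact: adjmx0.
by apply/matrixP=> p q; rewrite !mxE /= rmorphD.
Qed.

Lemma adjmx_eq0 m n (A : 'M[C]_(m, n)) : (adjmx A == 0) = (A == 0).
Proof.
apply/eqP/eqP=> [h|->]; last exact: adjmx0.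
by rewrite -[A]adjmxK h adjmx0.
Qed.

Lemma adjmx_delta m (k : 'I_m) : adjmx (delta_mx k 0 : 'cV[C]_m) = delta_mx 0 k.
Proof. by apply/matrixP=> p q; rewrite adjmxE !mxE andbC rmorph_nat. Qed.

Lemma orth_supports_mulP m (A B : 'M[C]_m) :
  adjmx A = A -> orth_supports A B <-> A *m B = 0.
Proof.
move=> hA; rewrite /orth_supports; split=> [h|AB u v].
  apply/matrixP=> k l; have := h (delta_mx k 0) (delta_mx l 0).
  rewrite adjmxM hA -mulmxA (mulmxA A) mulmxA adjmx_delta -rowE -colE.
  by move/(congr1 (fun M : 'M[C]_(1, 1) => M 0 0)); rewrite !mxE.
by rewrite adjmxM hA -mulmxA (mulmxA A) AB mul0mx mulmx0.
Qed.

Lemma trace_outer_mul m (a b : 'cV[C]_m) :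
  \tr (a *m adjmx a *m (b *m adjmx b)) =
  (adjmx a *m b) 0 0 * ((adjmx a *m b) 0 0)^*.
Proof.
rewrite -!mulmxA mxtrace_mulC -!mulmxA /mxtrace big_ord1.
have -> : adjmx b *m a = adjmx (adjmx a *m b) by rewrite adjmxM adjmxK.
by rewrite mulmxA mxE big_ord1 adjmxE.
Qed.

(* A product of two sums of rank-one positive matrices vanishes iff all the
   cross inner products do, since its trace is the sum of their squared moduli. *)
Lemma sum_outer_mul_eq0P m (I J : finType) (a : I -> 'cV[C]_m) (b : J -> 'cV[C]_m) :
  (\sum_i a i *m adjmx (a i)) *m (\sum_j b j *m adjmx (b j)) = 0 <->
  (forall i j, adjmx (a i) *m b j = 0).
Proof.
split=> [AB i j|h]; last first.
  rewrite mulmx_suml big1 // => i _; rewrite mulmx_sumr big1 // => j _.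
  by rewrite -!mulmxA (mulmxA (adjmx (a i))) h mul0mx !mulmx0.
have := congr1 mxtrace AB.
rewrite mxtrace0 mulmx_suml raddf_sum.
under eq_bigr => i' _ do rewrite mulmx_sumr raddf_sum.
under eq_bigr => i' _ do under eq_bigr => j' _ do rewrite /= trace_outer_mul.
have ge0 x : 0 <= x * x^* :> C by exact: mul_conjC_ge0.
move=> /(psumr_eq0P (fun i _ => sumr_ge0 _ (fun j _ => ge0 _))) /(_ i isT).
move=> /(psumr_eq0P (fun j _ => ge0 _)) /(_ j isT) /eqP.
rewrite mul_conjC_eq0 => /eqP ab0.
by apply/matrixP=> p q; rewrite !ord1 ab0 mxE.
Qed.

Lemma orth_supports_sum_outerP m (I J : finType) (a : I -> 'cV[C]_m) (b : J -> 'cV[C]_m) :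
  orth_supports (\sum_i a i *m adjmx (a i)) (\sum_j b j *m adjmx (b j)) <->
  (forall i j, adjmx (a i) *m b j = 0).
Proof.
rewrite orth_supports_mulP ?sum_outer_mul_eq0P //.
by rewrite adjmx_sum; apply: eq_bigr=> i _; rewrite adjmxM adjmxK.
Qed.

End Adjoint.

(** * Zero-error codes depend only on the Choi-Kraus space *)

Section Multilinear.
Variables (R : pzRingType) (X V : lmodType R).

Definition upd (Es : nat -> X) (t : nat) (x : X) : nat -> X :=
  fun s => if s == t then x else Es s.

(* Replace the coordinates t < n one at a time, from t = 0 upwards: after d
   steps the first d coordinates lie in the span and the others in the range of E. *)
Lemma multilinear_span_eq0 n k (E : 'I_k -> X) (f : (nat -> X) -> V) :
  (forall Es t (c : 'I_k -> R), (t < n)%N ->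
     f (upd Es t (\sum_j c j *: E j)) = \sum_j c j *: f (upd Es t (E j))) ->
  (forall Es, (forall t, (t < n)%N -> exists j, Es t = E j) -> f Es = 0) ->
  forall Es, (forall t, (t < n)%N -> exists c : 'I_k -> R, Es t = \sum_j c j *: E j) ->
  f Es = 0.
Proof.
move=> f_lin f_range.
suff H d Es : (forall t, (t < n)%N ->
   ((t < d)%N -> exists c : 'I_k -> R, Es t = \sum_j c j *: E j) /\
   ((d <= t)%N -> exists j, Es t = E j)) -> f Es = 0.
  move=> Es hEs; apply: (H n)=> t ht; split=> [_|]; first exact: hEs.
  by rewrite leqNgt ht.
elim: d Es => [|d IH] Es hEs; first by apply: f_range=> t ht; apply: (hEs t ht).2.
have [lt_dn|le_nd] := ltnP d n; last first.
  apply: IH=> t ht; split=> [lt_td|le_dt]; first by apply: (hEs t ht).1; exact: ltnW.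
  by have := leq_trans le_nd le_dt; rewrite leqNgt ht.
have [c Ed] := (hEs d lt_dn).1 (ltnSn d).
have -> : Es = upd Es d (\sum_j c j *: E j).
  by apply: funext=> s; rewrite /upd; case: eqP=> // ->.
rewrite f_lin // big1 // => j _; rewrite IH ?scaler0 // => t ht; split=> [lt_td|le_dt].
  by rewrite /upd ltn_eqF //; apply: (hEs t ht).1; exact: ltnW.
rewrite /upd; case: eqP=> [_|/eqP ntd]; first by exists j.
by apply: (hEs t ht).2; rewrite ltn_neqAle eq_sym ntd.
Qed.

End Multilinear.

Section Slices.
Variable C : numClosedFieldType.

Definition slice a b (v : 'cV[C]_(a * b)) (l : 'I_a) : 'cV[C]_b :=
  \col_i v (mxtens_index (l, i)) 0.

Lemma ptrace1_outer a b (v : 'cV[C]_(a * b)) :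
  ptrace1 (v *m adjmx v) = \sum_l slice v l *m adjmx (slice v l).
Proof.
apply/matrixP=> i j; rewrite mxE summxE; apply: eq_bigr=> l _.
by rewrite !mxE !big_ord1 !adjmxE !mxE.
Qed.

Lemma slice_sum a b k (c : 'I_k -> C) (v : 'I_k -> 'cV[C]_(a * b)) l :
  slice (\sum_j c j *: v j) l = \sum_j c j *: slice (v j) l.
Proof.
by apply/matrixP=> i z; rewrite !mxE !summxE; apply: eq_bigr=> j _; rewrite !mxE.
Qed.

Lemma tensmx_suml k m n p q (c : 'I_k -> C) (G : 'I_k -> 'M[C]_(m, n))
    (B : 'M[C]_(p, q)) :
  (\sum_j c j *: G j) *t B = \sum_j c j *: (G j *t B).
Proof.
apply/matrixP=> i l; rewrite !mxE !summxE mulr_suml; apply: eq_bigr=> j _.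
by rewrite !mxE mulrA.
Qed.

End Slices.

Section Branches.
Variables (C : numClosedFieldType) (dA dB n M : nat) (cd : fcode C dA dB n M).
Local Notation round m t := (@Defs.round C dA dB n M cd m t).
Local Notation branch := (@Defs.branch C dA dB n M cd).

Lemma branchS m Es t : branch m Es t.+1 = round m t (Es t) (branch m Es t).
Proof. by []. Qed.

Lemma round_sumr m t Ej k (c : 'I_k -> C) (v : 'I_k -> 'cV[C]_(xd cd t * fd cd t * yd cd t)) :
  round m t Ej (\sum_j c j *: v j) = \sum_j c j *: round m t Ej (v j).
Proof. by rewrite /Defs.round !mulmx_sumr; apply: eq_bigr=> j _; rewrite !scalemxAr. Qed.

Lemma round_suml m t k (c : 'I_k -> C) (G : 'I_k -> 'M[C]_(dB, dA)) v :
  round m t (\sum_j c j *: G j) v = \sum_j c j *: round m t (G j) v.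
Proof.
rewrite /Defs.round !tensmx_suml mulmx_sumr mulmx_suml; apply: eq_bigr=> j _.
by rewrite -scalemxAr -scalemxAl.
Qed.

Lemma eq_branch m (Es Fs : nat -> 'M[C]_(dB, dA)) T :
  (forall t, (t < T)%N -> Es t = Fs t) -> branch m Es T = branch m Fs T.
Proof.
elim: T=> [//|T IH] EF /=.
by rewrite EF // IH // => t ht; apply: EF; exact: ltnW.
Qed.

Lemma branch_sum m Es t k (c : 'I_k -> C) (G : 'I_k -> 'M[C]_(dB, dA)) T :
  (t < T)%N ->
  branch m (upd Es t (\sum_j c j *: G j)) T = \sum_j c j *: branch m (upd Es t (G j)) T.
Proof.
elim: T=> [//|T IH] lt_tT /=; have updT X : upd Es t X t = X by rewrite /upd eqxx.
have [lt_tT'|lt_Tt|<-] := ltngtP t T.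
- have updE X : upd Es t X T = Es T by rewrite /upd gtn_eqF.
  by rewrite updE IH // round_sumr; apply: eq_bigr=> j _; rewrite updE.
- by rewrite ltnS leqNgt lt_Tt in lt_tT.
rewrite updT round_suml; apply: eq_bigr=> j _; rewrite updT.
by congr (_ *: round _ _ _ _); apply: eq_branch=> s lt_st; rewrite /upd ltn_eqF.
Qed.

Definition orth_branches (S : 'M[C]_(dB, dA) -> Prop) :=
  forall m m' : 'I_M, m != m' -> forall Es Fs : nat -> 'M[C]_(dB, dA),
  (forall t, (t < n)%N -> S (Es t)) -> (forall t, (t < n)%N -> S (Fs t)) ->
  forall l l', adjmx (slice (branch m Es n) l) *m slice (branch m' Fs n) l' = 0.

Lemma final_state_outer m k (E : 'I_k -> 'M[C]_(dB, dA)) :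
  final_state cd m E = \sum_(p : {ffun 'I_n -> 'I_k} * 'I_(xd cd n * fd cd n))
     slice (branch m (kraus_at E p.1) n) p.2 *m
     adjmx (slice (branch m (kraus_at E p.1) n) p.2).
Proof.
by rewrite /final_state (eq_bigr _ (fun js _ => ptrace1_outer _)) pair_bigA.
Qed.

Lemma kraus_atP k (E : 'I_k -> 'M[C]_(dB, dA)) (js : {ffun 'I_n -> 'I_k}) t :
  (t < n)%N -> exists j, kraus_at E js t = E j.
Proof. by move=> ht; rewrite /kraus_at insubT /=; eexists. Qed.

Lemma kraus_at_choice k (E : 'I_k -> 'M[C]_(dB, dA)) (Es : nat -> 'M[C]_(dB, dA)) :
  (forall t, (t < n)%N -> exists j, Es t = E j) ->
  exists js : {ffun 'I_n -> 'I_k}, forall t, (t < n)%N -> Es t = kraus_at E js t.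
Proof.
move=> hEs; have [f hf] := fin_all_exists (fun i : 'I_n => hEs i (ltn_ord i)).
by exists [ffun i => f i]=> t ht; rewrite /kraus_at insubT /= ffunE -hf.
Qed.

Lemma zero_error_orth_branchesP k (E : 'I_k -> 'M[C]_(dB, dA)) :
  zero_error E cd <-> orth_branches (fun X => exists j, X = E j).
Proof.
split=> [hz m m' nm Es Fs hE hF l l'|hZ m m' nm].
  have [je /eq_branch ->] := kraus_at_choice hE.
  have [jf /eq_branch ->] := kraus_at_choice hF.
  have := hz m m' nm; rewrite !final_state_outer => /orth_supports_sum_outerP.
  move=> h; exact: (h (je, l) (jf, l')).
rewrite !final_state_outer; apply/orth_supports_sum_outerP=> [[js l] [js' l']] /=.
by apply: hZ=> // t ht; apply: kraus_atP.
Qed.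

Lemma orth_branches_span k (E : 'I_k -> 'M[C]_(dB, dA)) :
  orth_branches (fun X => exists j, X = E j) ->
  orth_branches (fun X => exists c : 'I_k -> C, X = \sum_j c j *: E j).
Proof.
move=> hZ m m' nm Es Fs hE hF l l'.
have orth_range_l Es' : (forall t, (t < n)%N -> exists j, Es' t = E j) ->
    adjmx (slice (branch m Es' n) l) *m slice (branch m' Fs n) l' = 0.
  move=> hE'; apply: (multilinear_span_eq0 (n := n) (E := E)
    (f := fun Fs' => adjmx (slice (branch m Es' n) l) *m slice (branch m' Fs' n) l')) => //.
  - move=> Gs t c ht /=; rewrite branch_sum // slice_sum mulmx_sumr.
    by apply: eq_bigr=> j _; rewrite scalemxAr.
  - by move=> Gs hG; apply: hZ.
apply/eqP; rewrite -adjmx_eq0; apply/eqP.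
apply: (multilinear_span_eq0 (n := n) (E := E) (f := fun Es' =>
    adjmx (adjmx (slice (branch m Es' n) l) *m slice (branch m' Fs n) l'))) => //.
- move=> Gs t c ht /=; rewrite branch_sum // slice_sum adjmxM adjmxK mulmx_sumr.
  by apply: eq_bigr=> j _; rewrite adjmxM adjmxK scalemxAr.
- by move=> Gs hG; rewrite orth_range_l // adjmx0.
Qed.

Lemma sub_orth_branches (S S' : 'M[C]_(dB, dA) -> Prop) :
  (forall X, S' X -> S X) -> orth_branches S -> orth_branches S'.
Proof.
by move=> hS hZ m m' nm Es Fs hE hF; apply: hZ=> // t ht; apply: hS; auto.
Qed.

End Branches.

Lemma kraus_mx_span (C : numClosedFieldType) dB dA k k'
    (E : 'I_k -> 'M[C]_(dB, dA)) (E' : 'I_k' -> 'M[C]_(dB, dA)) :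
  (kraus_mx E' <= kraus_mx E)%MS ->
  forall j, exists c : 'I_k -> C, E' j = \sum_i c i *: E i.
Proof.
move=> /submxP [D hD] j; exists (fun i => D j i).
apply: (can_inj mxvecK); rewrite linear_sum /=.
have := congr1 (row j) hD; rewrite /kraus_mx rowK row_mul mulmx_sum_row => ->.
by apply: eq_bigr=> i _; rewrite linearZ /= rowK mxE.
Qed.

Lemma zero_error_kraus_submx (C : numClosedFieldType) dA dB n M k k'
    (E : 'I_k -> 'M[C]_(dB, dA)) (E' : 'I_k' -> 'M[C]_(dB, dA))
    (cd : fcode C dA dB n M) :
  (kraus_mx E' <= kraus_mx E)%MS -> zero_error E cd -> zero_error E' cd.
Proof.
move=> sE'E /zero_error_orth_branchesP /orth_branches_span hZ.
apply/zero_error_orth_branchesP; apply: sub_orth_branches hZ => X [j ->].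
exact: kraus_mx_span.
Qed.

(** * Concatenation of feedback-assisted codes *)

Lemma pair_index_lt x y A B : (x < A)%N -> (y < B)%N -> (x * B + y < A * B)%N.
Proof. by move=> hx hy; exact: (mxtens_index_proof (Ordinal hx, Ordinal hy)). Qed.

Lemma pair_index_divn x y B : (y < B)%N -> ((x * B + y) %/ B = x)%N.
Proof. by move=> hy; rewrite divnMDl ?divn_small ?addn0 //; apply: leq_ltn_trans hy. Qed.

Lemma pair_index_modn x y B : (y < B)%N -> ((x * B + y) %% B = y)%N.
Proof. by move=> hy; rewrite modnMDl modn_small. Qed.

Lemma pair_indexP A B l : (l < A * B)%N ->
  exists i j, [/\ (i < A)%N, (j < B)%N & l = (i * B + j)%N].
Proof.
move=> hl; have B0 : (0 < B)%N by case: B hl => //; rewrite muln0.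
exists (l %/ B)%N, (l %% B)%N; split; last exact: divn_eq.
  by rewrite ltn_divLR.
by rewrite ltn_mod.
Qed.

Lemma eqn_pair_index i i' j j' B : (j < B)%N -> (j' < B)%N ->
  (i * B + j == i' * B + j')%N = (i == i') && (j == j').
Proof. by move=> h h'; rewrite eq_addl_mul // xpair_eqE. Qed.

Section TensorIndices.
Variable C : numClosedFieldType.

Lemma big_mxtens_index a b (F : 'I_(a * b) -> C) :
  \sum_k F k = \sum_(i < a) \sum_(j < b) F (mxtens_index (i, j)).
Proof.
rewrite pair_bigA /= (reindex (fun p : 'I_a * 'I_b => mxtens_index p)) /=.
  by apply: eq_bigr=> [[i j]] _.
by exists (@mxtens_unindex a b)=> x _; [apply: mxtens_indexK|apply: mxtens_unindexK].
Qed.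

Lemma big_ord_delta n (j : 'I_n) (F : 'I_n -> C) :
  \sum_k (1 *+ (j == k)) * F k = F j.
Proof.
rewrite (bigD1 j) //= eqxx mulr1n mul1r big1 ?addr0 // => k nk.
by rewrite eq_sym (negbTE nk) mulr0n mul0r.
Qed.

Lemma idx_mx_mulE m n (g : 'I_n -> 'I_m) (ginj : injective g) k0 (w : 'cV[C]_n) :
  (idx_mx C g *m w) (g k0) 0 = w k0 0.
Proof.
rewrite mxE (bigD1 k0) //= mxE eqxx mul1r big1 ?addr0 // => k nk.
rewrite mxE; case: eqP=> [/ginj e|_]; last by rewrite mul0r.
by rewrite e eqxx in nk.
Qed.

Lemma reassoc_idxE x f y (i : 'I_x) (l : 'I_f) (j : 'I_y) :
  reassoc_idx (mxtens_index (i, mxtens_index (l, j))) =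
  mxtens_index (mxtens_index (i, l), j).
Proof. by rewrite /reassoc_idx !mxtens_indexK. Qed.

Lemma reorder_idxE b x y (i : 'I_b) (l : 'I_x) (j : 'I_y) :
  reorder_idx (mxtens_index (mxtens_index (i, l), j)) =
  mxtens_index (l, mxtens_index (j, i)).
Proof. by rewrite /reorder_idx !mxtens_indexK. Qed.

Lemma mxtens_index_inj a b : injective (@mxtens_index a b).
Proof. exact: can_inj (@mxtens_indexK a b). Qed.

Lemma reassoc_idx_inj x f y : injective (@reassoc_idx x f y).
Proof.
move=> k1 k2; case: (mxtens_indexP k1)=> i1 fy1; case: (mxtens_indexP fy1)=> l1 j1.
case: (mxtens_indexP k2)=> i2 fy2; case: (mxtens_indexP fy2)=> l2 j2.
rewrite !reassoc_idxE => /mxtens_index_inj/pair_equal_spec [/mxtens_index_inj/pair_equal_spec [-> ->] ->] //.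
Qed.

Lemma reorder_idx_inj b x y : injective (@reorder_idx b x y).
Proof.
move=> k1 k2; case: (mxtens_indexP k1)=> i1 fy1; case: (mxtens_indexP i1)=> l1 j1.
case: (mxtens_indexP k2)=> i2 fy2; case: (mxtens_indexP i2)=> l2 j2.
rewrite !reorder_idxE => /mxtens_index_inj/pair_equal_spec [-> /mxtens_index_inj/pair_equal_spec [-> ->]] //.
Qed.

Lemma tensmx1_mulE m n q (A : 'M[C]_(m, n)) (v : 'cV[C]_(n * q)) i j :
  ((A *t (1%:M : 'M[C]_q)) *m v) (mxtens_index (i, j)) 0 =
  \sum_k A i k * v (mxtens_index (k, j)) 0.
Proof.
rewrite mxE big_mxtens_index; apply: eq_bigr=> k _.
rewrite (eq_bigr (fun l => (1 *+ (j == l)) * (A i k * v (mxtens_index (k, l)) 0))).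
  by rewrite big_ord_delta.
by move=> l _; rewrite tensmxE mxE mulrCA mulrA.
Qed.

Lemma tens1mx_mulE m n q (B : 'M[C]_(m, n)) (v : 'cV[C]_(q * n)) i j :
  (((1%:M : 'M[C]_q) *t B) *m v) (mxtens_index (i, j)) 0 =
  \sum_k B j k * v (mxtens_index (i, k)) 0.
Proof.
rewrite mxE big_mxtens_index exchange_big /=; apply: eq_bigr=> k _.
rewrite (eq_bigr (fun l => (1 *+ (i == l)) * (B j k * v (mxtens_index (l, k)) 0))).
  by rewrite big_ord_delta.
by move=> l _; rewrite tensmxE mxE mulrA.
Qed.

Section RoundEntries.
Variables (dA dB n M : nat) (cd : fcode C dA dB n M).
Local Notation rnd m t := (@round C dA dB n M cd m t).

Lemma roundE m t Ej v x' f' y' :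
  rnd m t Ej v (mxtens_index (mxtens_index (x', f'), y')) 0 =
  \sum_(y < yd cd t) \sum_(b < dB) decW cd t (mxtens_index (f', y')) (mxtens_index (y, b)) *
    (\sum_(a < dA) Ej b a * \sum_(kk < xd cd t * fd cd t)
        encU cd m t (mxtens_index (a, x')) kk * v (mxtens_index (kk, y)) 0).
Proof.
rewrite /round -!mulmxA -reassoc_idxE idx_mx_mulE; last exact: reassoc_idx_inj.
rewrite tens1mx_mulE big_mxtens_index; apply: eq_bigr=> y _; apply: eq_bigr=> b _.
congr (_ * _).
rewrite -reorder_idxE idx_mx_mulE; last exact: reorder_idx_inj.
rewrite tensmx1_mulE big_mxtens_index; apply: eq_bigr=> a _.
rewrite (eq_bigr (fun l => (1 *+ (x' == l)) * (Ej b a *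
      ((encU cd m t *t 1%:M) *m v) (mxtens_index (mxtens_index (a, l), y)) 0))).
  by rewrite big_ord_delta tensmx1_mulE mulr_sumr.
by move=> l _; rewrite tensmxE mxE mulrCA mulrA.
Qed.

End RoundEntries.
End TensorIndices.

Section NatEntries.
Variable C : numClosedFieldType.

(* Entry of A at natural-number indices, and 0 outside the matrix: the index
   arithmetic of tensor factors below is then done in nat. *)
Definition ent p q (A : 'M[C]_(p, q)) (i j : nat) : C :=
  if @insub nat (fun x => (x < p)%N) 'I_p i is Some a then
    if @insub nat (fun x => (x < q)%N) 'I_q j is Some b then A a b else 0
  else 0.

Lemma entE p q (A : 'M[C]_(p, q)) (a : 'I_p) (b : 'I_q) : ent A a b = A a b.
Proof. by rewrite /ent !valK. Qed.

Definition mkmx p q (g : nat -> nat -> C) : 'M[C]_(p, q) := \matrix_(i, j) g i j.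

Lemma ent_mkmx p q g i j : (i < p)%N -> (j < q)%N -> ent (mkmx p q g) i j = g i j.
Proof. by move=> hi hj; rewrite /ent insubT /= insubT /= mxE. Qed.

Lemma big_nat_pair a b (F : nat -> C) :
  \sum_(0 <= k < a * b) F k = \sum_(0 <= i < a) \sum_(0 <= j < b) F (i * b + j)%N.
Proof.
rewrite !big_mkord big_mxtens_index; apply: eq_bigr=> i _; by rewrite big_mkord.
Qed.

Lemma big_nat_delta_l N x (F : nat -> C) : (x < N)%N ->
  \sum_(0 <= y < N) (x == y)%:R * F y = F x.
Proof.
move=> hx; rewrite big_mkord (bigD1 (Ordinal hx)) //= eqxx mul1r big1 ?addr0 //.
by move=> k nk; rewrite eq_sym; case: eqP=> [e|]; [case/eqP: nk; apply: val_inj|rewrite mul0r].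
Qed.

Lemma big_nat_delta_r N x (F : nat -> C) : (x < N)%N ->
  \sum_(0 <= y < N) F y * (x == y)%:R = F x.
Proof.
move=> hx; rewrite -(big_nat_delta_l F hx); apply: eq_bigr=> y _; by rewrite mulrC.
Qed.

Lemma isometryP p q (A : 'M[C]_(p, q)) :
  Defs.isometry A <-> forall j j', (j < q)%N -> (j' < q)%N ->
     \sum_(0 <= i < p) (ent A i j)^* * ent A i j' = (j == j')%:R.
Proof.
split=> [h j j' hj hj'|h].
  have := congr1 (fun B : 'M[C]_q => B (Ordinal hj) (Ordinal hj')) h.
  rewrite !mxE => <-; rewrite big_mkord; apply: eq_bigr=> i _.
  by rewrite !mxE -!(entE A i (Ordinal _)).
apply/matrixP=> j j'; rewrite !mxE -(h j j') //.
rewrite big_mkord; apply: eq_bigr=> i _; by rewrite !mxE !entE.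
Qed.

Lemma isometry_pairP p A B (U : 'M[C]_(p, A * B)) :
  (forall a b a' b', (a < A)%N -> (b < B)%N -> (a' < A)%N -> (b' < B)%N ->
     \sum_(0 <= i < p) (ent U i (a * B + b))^* * ent U i (a' * B + b') =
     ((a == a') && (b == b'))%:R) ->
  Defs.isometry U.
Proof.
move=> h; apply/isometryP => j j' hj hj'.
have [a [b [ha hb ->]]] := pair_indexP hj.
have [a' [b' [ha' hb' ->]]] := pair_indexP hj'.
by rewrite eqn_pair_index // h.
Qed.

Lemma natr_and (a b : bool) : ((a && b)%:R : C) = a%:R * b%:R.
Proof. by rewrite -mulnb natrM. Qed.

Lemma big_nat_delta2 N x z (G : C) : (x < N)%N ->
  \sum_(0 <= y < N) G * ((y == x)%:R * (y == z)%:R) = G * (x == z)%:R.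
Proof.
move=> hx; rewrite -(big_nat_delta_r (fun y => G * (y == z)%:R) hx).
by apply: eq_big_nat=> y _; rewrite eq_sym mulrAC mulrA.
Qed.

Lemma big_nat_one N (F : nat -> C) : N = 1%N -> \sum_(0 <= i < N) F i = F 0%N.
Proof. by move=> ->; rewrite big_nat1. Qed.

Lemma phi_norm (dA' dB' n M : nat) (c : fcode C dA' dB' n M) :
  \sum_(0 <= x < xd c 0) \sum_(0 <= y < yd c 0)
     (ent (phi c) ((x * fd c 0 + 0) * yd c 0 + y) 0)^* *
      ent (phi c) ((x * fd c 0 + 0) * yd c 0 + y) 0 = 1.
Proof.
have := (isometryP _).1 (phi_unit c) 0%N 0%N isT isT.
rewrite (big_nat_pair (xd c 0 * fd c 0) (yd c 0)) (big_nat_pair (xd c 0) (fd c 0)).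
move=> h; transitivity (((0%N == 0%N)%:R : C)); last by rewrite eqxx.
rewrite -h; apply: eq_big_nat=> x _.
by rewrite [RHS](big_nat_one _ (fd0 c)).
Qed.

Section RoundNatEntries.
Variables (dA dB n M : nat) (cd : fcode C dA dB n M).
Local Notation rnd m t := (@round C dA dB n M cd m t).

Lemma round_entE m t Ej v x' f' y' :
  (x' < xd cd t.+1)%N -> (f' < fd cd t.+1)%N -> (y' < yd cd t.+1)%N ->
  ent (rnd m t Ej v) ((x' * fd cd t.+1 + f') * yd cd t.+1 + y') 0 =
  \sum_(0 <= y < yd cd t) \sum_(0 <= b < dB)
    ent (decW cd t) (f' * yd cd t.+1 + y') (y * dB + b) *
    (\sum_(0 <= a < dA) ent Ej b a * \sum_(0 <= kk < xd cd t * fd cd t)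
        ent (encU cd m t) (a * xd cd t.+1 + x') kk * ent v (kk * yd cd t + y) 0).
Proof.
move=> hx hf hy.
have -> := entE (rnd m t Ej v) (mxtens_index (mxtens_index (Ordinal hx, Ordinal hf), Ordinal hy)) 0.
rewrite roundE big_mkord; apply: eq_bigr=> y _; rewrite big_mkord; apply: eq_bigr=> b _.
rewrite -(entE (decW cd t) (mxtens_index (Ordinal hf, Ordinal hy)) (mxtens_index (y, b))) /=.
congr (_ * _); rewrite big_mkord; apply: eq_bigr=> a _.
rewrite entE; congr (_ * _); rewrite big_mkord; apply: eq_bigr=> kk _.
rewrite -(entE (encU cd m t) (mxtens_index (a, Ordinal hx)) kk) /=.
by rewrite -(entE v (mxtens_index (kk, y)) 0).
Qed.

End RoundNatEntries.
End NatEntries.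

Section Concatenation.
Variable C : numClosedFieldType.
Variables (dA dB n1 n2 M1 M2 : nat) (c1 : fcode C dA dB n1 M1) (c2 : fcode C dA dB n2 M2).

(* Run c1 during rounds 1..n1 and c2 afterwards.  Every register is the product
   of those of c1 and c2: c1 stays frozen at its time-n1 registers after round
   n1 and c2 at its time-0 ones before it (as t - n1 truncates to 0); a message
   of the product code is the pair (mxtens_unindex m) of messages. *)
Definition catX t := (xd c1 (minn t n1) * xd c2 (t - n1))%N.
Definition catF t := (fd c1 (minn t n1) * fd c2 (t - n1))%N.
Definition catY t := (yd c1 (minn t n1) * yd c2 (t - n1))%N.

(* Folded so that [/=] leaves the index arithmetic alone. *)
Definition idx_hi N i := (i %/ N)%N.
Definition idx_lo N i := (i %% N)%N.

Definition cat_phi : 'cV[C]_(catX 0 * catF 0 * catY 0) := mkmx _ _ (fun i _ =>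
  let xf := idx_hi (catY 0) i in let y := idx_lo (catY 0) i in
  let xx := idx_hi (catF 0) xf in let ff := idx_lo (catF 0) xf in
  ent (phi c1) ((idx_hi (xd c2 0) xx * fd c1 (minn 0 n1) + idx_hi (fd c2 0) ff) * yd c1 (minn 0 n1)
                 + idx_hi (yd c2 0) y) 0 *
  ent (phi c2) ((idx_lo (xd c2 0) xx * fd c2 0 + idx_lo (fd c2 0) ff) * yd c2 0 + idx_lo (yd c2 0) y) 0).

Definition cat_enc (m : 'I_(M1 * M2)) t : 'M[C]_(dA * catX t.+1, catX t * catF t) := mkmx _ _ (fun i j =>
  let a := idx_hi (catX t.+1) i in let x' := idx_lo (catX t.+1) i in
  let x1' := idx_hi (xd c2 (t.+1 - n1)) x' in let x2' := idx_lo (xd c2 (t.+1 - n1)) x' in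
  let xx := idx_hi (catF t) j in let ff := idx_lo (catF t) j in
  let x1 := idx_hi (xd c2 (t - n1)) xx in let x2 := idx_lo (xd c2 (t - n1)) xx in
  let f1 := idx_hi (fd c2 (t - n1)) ff in let f2 := idx_lo (fd c2 (t - n1)) ff in
  if (t < n1)%N then
    ent (encU c1 (mxtens_unindex m).1 t) (a * xd c1 t.+1 + x1') (x1 * fd c1 t + f1) * (x2' == x2)%:R
  else
    ent (encU c2 (mxtens_unindex m).2 (t - n1)) (a * xd c2 (t - n1).+1 + x2') (x2 * fd c2 (t - n1) + f2)
      * (x1' == x1)%:R).

Definition cat_dec t : 'M[C]_(catF t.+1 * catY t.+1, catY t * dB) := mkmx _ _ (fun i j =>
  let ff' := idx_hi (catY t.+1) i in let yy' := idx_lo (catY t.+1) i in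
  let f1' := idx_hi (fd c2 (t.+1 - n1)) ff' in let f2' := idx_lo (fd c2 (t.+1 - n1)) ff' in
  let y1' := idx_hi (yd c2 (t.+1 - n1)) yy' in let y2' := idx_lo (yd c2 (t.+1 - n1)) yy' in
  let yy := idx_hi dB j in let b := idx_lo dB j in
  let y1 := idx_hi (yd c2 (t - n1)) yy in let y2 := idx_lo (yd c2 (t - n1)) yy in
  if (t < n1)%N then
    ent (decW c1 t) (f1' * yd c1 t.+1 + y1') (y1 * dB + b) * (y2' == y2)%:R
  else
    ent (decW c2 (t - n1)) (f2' * yd c2 (t - n1).+1 + y2') (y2 * dB + b) * (y1' == y1)%:R).

Lemma cat_encE_fst m t a x1 x2 x1o x2o f1o f2o : (t < n1)%N -> (a < dA)%N ->
  (x1 < xd c1 (minn t.+1 n1))%N -> (x2 < xd c2 (t.+1 - n1))%N ->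
  (x1o < xd c1 (minn t n1))%N -> (x2o < xd c2 (t - n1))%N ->
  (f1o < fd c1 (minn t n1))%N -> (f2o < fd c2 (t - n1))%N ->
  ent (cat_enc m t) (a * catX t.+1 + (x1 * xd c2 (t.+1 - n1) + x2))
      ((x1o * xd c2 (t - n1) + x2o) * catF t + (f1o * fd c2 (t - n1) + f2o))
  = ent (encU c1 (mxtens_unindex m).1 t) (a * xd c1 t.+1 + x1) (x1o * fd c1 t + f1o)
    * (x2 == x2o)%:R.
Proof.
move=> ht ha hx1 hx2 hx1o hx2o hf1o hf2o.
rewrite ent_mkmx; last 2 first.
- by apply: pair_index_lt=> //; apply: pair_index_lt.
- by apply: pair_index_lt; apply: pair_index_lt.
rewrite /= ht /idx_hi /idx_lo !pair_index_divn ?pair_index_modn ?pair_index_divn ?pair_index_modn //; by apply: pair_index_lt.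
Qed.

Lemma cat_encE_snd m t a x1 x2 x1o x2o f1o f2o : (n1 <= t)%N -> (a < dA)%N ->
  (x1 < xd c1 (minn t.+1 n1))%N -> (x2 < xd c2 (t.+1 - n1))%N ->
  (x1o < xd c1 (minn t n1))%N -> (x2o < xd c2 (t - n1))%N ->
  (f1o < fd c1 (minn t n1))%N -> (f2o < fd c2 (t - n1))%N ->
  ent (cat_enc m t) (a * catX t.+1 + (x1 * xd c2 (t.+1 - n1) + x2))
      ((x1o * xd c2 (t - n1) + x2o) * catF t + (f1o * fd c2 (t - n1) + f2o))
  = ent (encU c2 (mxtens_unindex m).2 (t - n1)) (a * xd c2 (t - n1).+1 + x2)
        (x2o * fd c2 (t - n1) + f2o) * (x1 == x1o)%:R.
Proof.
move=> ht ha hx1 hx2 hx1o hx2o hf1o hf2o.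
rewrite ent_mkmx; last 2 first.
- by apply: pair_index_lt=> //; apply: pair_index_lt.
- by apply: pair_index_lt; apply: pair_index_lt.
rewrite /= ltnNge ht /= /idx_hi /idx_lo !pair_index_divn ?pair_index_modn ?pair_index_divn ?pair_index_modn //; last by apply: pair_index_lt.
all: by apply: pair_index_lt.
Qed.

Lemma cat_decE_fst t f1 f2 y1 y2 y1o y2o b : (t < n1)%N ->
  (f1 < fd c1 (minn t.+1 n1))%N -> (f2 < fd c2 (t.+1 - n1))%N ->
  (y1 < yd c1 (minn t.+1 n1))%N -> (y2 < yd c2 (t.+1 - n1))%N ->
  (y1o < yd c1 (minn t n1))%N -> (y2o < yd c2 (t - n1))%N -> (b < dB)%N ->
  ent (cat_dec t) ((f1 * fd c2 (t.+1 - n1) + f2) * catY t.+1 + (y1 * yd c2 (t.+1 - n1) + y2))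
      ((y1o * yd c2 (t - n1) + y2o) * dB + b)
  = ent (decW c1 t) (f1 * yd c1 t.+1 + y1) (y1o * dB + b) * (y2 == y2o)%:R.
Proof.
move=> ht hf1 hf2 hy1 hy2 hy1o hy2o hb.
rewrite ent_mkmx; last 2 first.
- by apply: pair_index_lt; apply: pair_index_lt.
- by apply: pair_index_lt=> //; apply: pair_index_lt.
rewrite /= ht /idx_hi /idx_lo !pair_index_divn ?pair_index_modn ?pair_index_divn ?pair_index_modn //; by apply: pair_index_lt.
Qed.

Lemma cat_decE_snd t f1 f2 y1 y2 y1o y2o b : (n1 <= t)%N ->
  (f1 < fd c1 (minn t.+1 n1))%N -> (f2 < fd c2 (t.+1 - n1))%N ->
  (y1 < yd c1 (minn t.+1 n1))%N -> (y2 < yd c2 (t.+1 - n1))%N ->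
  (y1o < yd c1 (minn t n1))%N -> (y2o < yd c2 (t - n1))%N -> (b < dB)%N ->
  ent (cat_dec t) ((f1 * fd c2 (t.+1 - n1) + f2) * catY t.+1 + (y1 * yd c2 (t.+1 - n1) + y2))
      ((y1o * yd c2 (t - n1) + y2o) * dB + b)
  = ent (decW c2 (t - n1)) (f2 * yd c2 (t - n1).+1 + y2) (y2o * dB + b) * (y1 == y1o)%:R.
Proof.
move=> ht hf1 hf2 hy1 hy2 hy1o hy2o hb.
rewrite ent_mkmx; last 2 first.
- by apply: pair_index_lt; apply: pair_index_lt.
- by apply: pair_index_lt=> //; apply: pair_index_lt.
rewrite /= ltnNge ht /= /idx_hi /idx_lo !pair_index_divn ?pair_index_modn ?pair_index_divn ?pair_index_modn //; last by apply: pair_index_lt.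
all: by apply: pair_index_lt.
Qed.

End Concatenation.

Section ConcatenationIsometry.
Variable C : numClosedFieldType.
Variables (dA dB n1 n2 M1 M2 : nat) (c1 : fcode C dA dB n1 M1) (c2 : fcode C dA dB n2 M2).

Lemma cat_enc_iso_fst m t : (t < n1)%N -> Defs.isometry (cat_enc c1 c2 m t).
Proof.
move=> htn; apply: isometry_pairP => xx ff xx' ff' hxx hff hxx' hff'.
have [x1o [x2o [hx1o hx2o ->]]] := pair_indexP hxx.
have [f1o [f2o [hf1o hf2o ->]]] := pair_indexP hff.
have [z1 [z2 [hz1 hz2 ->]]] := pair_indexP hxx'.
have [g1 [g2 [hg1 hg2 ->]]] := pair_indexP hff'.
rewrite !eqn_pair_index // (big_nat_pair dA (catX c1 c2 t.+1)).
have ez1 : (t.+1 - n1 = 0)%N by apply/eqP; rewrite subn_eq0.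
have ez0 : (t - n1 = 0)%N by apply/eqP; rewrite subn_eq0 ltnW.
have hx2o' : (x2o < xd c2 (t.+1 - n1))%N by rewrite ez1 -ez0.
under eq_big_nat => a /andP[_ ha].
  rewrite (big_nat_pair (xd c1 (minn t.+1 n1)) (xd c2 (t.+1 - n1))).
  under eq_big_nat => x1 /andP[_ hx1].
    under eq_big_nat => x2 /andP[_ hx2].
      rewrite (cat_encE_fst _ htn ha hx1 hx2 hx1o hx2o hf1o hf2o).
      rewrite (cat_encE_fst _ htn ha hx1 hx2 hz1 hz2 hg1 hg2).
      rewrite rmorphM rmorph_nat mulrACA.
      over.
    rewrite (big_nat_delta2 _ _ hx2o').
    over.
  rewrite -mulr_suml.
  over.
rewrite -mulr_suml.
have e1 : minn t.+1 n1 = t.+1 by apply/minn_idPl.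
have e0 : minn t n1 = t by apply/minn_idPl/ltnW.
rewrite e0 in hx1o hf1o hz1 hg1; rewrite e1.
have f2o0 : f2o = 0%N by move: hf2o; rewrite ez0 fd0; case: f2o.
have g20 : g2 = 0%N by move: hg2; rewrite ez0 fd0; case: g2.
rewrite f2o0 g20 eqxx andbT.
have b1 : (x1o * fd c1 t + f1o < xd c1 t * fd c1 t)%N by apply: pair_index_lt.
have b2 : (z1 * fd c1 t + g1 < xd c1 t * fd c1 t)%N by apply: pair_index_lt.
have := (isometryP _).1 (encU_iso c1 (mxtens_unindex m).1 htn) _ _ b1 b2.
rewrite (big_nat_pair dA (xd c1 t.+1)) eqn_pair_index // => ->.
by rewrite !natr_and mulrAC.
Qed.

Lemma cat_enc_iso_snd m t : (n1 <= t < n1 + n2)%N -> Defs.isometry (cat_enc c1 c2 m t).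
Proof.
move=> /andP [htn ht]; apply: isometry_pairP => xx ff xx' ff' hxx hff hxx' hff'.
have [x1o [x2o [hx1o hx2o ->]]] := pair_indexP hxx.
have [f1o [f2o [hf1o hf2o ->]]] := pair_indexP hff.
have [z1 [z2 [hz1 hz2 ->]]] := pair_indexP hxx'.
have [g1 [g2 [hg1 hg2 ->]]] := pair_indexP hff'.
rewrite !eqn_pair_index // (big_nat_pair dA (catX c1 c2 t.+1)).
have e1 : minn t.+1 n1 = n1 by apply/minn_idPr/ltnW.
have e0 : minn t n1 = n1 by apply/minn_idPr.
have hx1o' : (x1o < xd c1 (minn t.+1 n1))%N by move: hx1o; rewrite e1 e0.
under eq_big_nat => a /andP[_ ha].
  rewrite (big_nat_pair (xd c1 (minn t.+1 n1)) (xd c2 (t.+1 - n1))).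
  under eq_big_nat => x1 /andP[_ hx1].
    under eq_big_nat => x2 /andP[_ hx2].
      rewrite (cat_encE_snd _ htn ha hx1 hx2 hx1o hx2o hf1o hf2o).
      rewrite (cat_encE_snd _ htn ha hx1 hx2 hz1 hz2 hg1 hg2).
      rewrite rmorphM rmorph_nat mulrACA.
      over.
    rewrite -mulr_suml.
    over.
  rewrite (big_nat_delta2 _ _ hx1o').
  over.
rewrite -mulr_suml subSn //.
have f1o0 : f1o = 0%N by move: hf1o; rewrite e0 fdn; case: f1o.
have g10 : g1 = 0%N by move: hg1; rewrite e0 fdn; case: g1.
rewrite f1o0 g10 eqxx /=.
have hs : (t - n1 < n2)%N by rewrite ltn_subLR.
have b1 : (x2o * fd c2 (t - n1) + f2o < xd c2 (t - n1) * fd c2 (t - n1))%N by apply: pair_index_lt.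
have b2 : (z2 * fd c2 (t - n1) + g2 < xd c2 (t - n1) * fd c2 (t - n1))%N by apply: pair_index_lt.
have := (isometryP _).1 (encU_iso c2 (mxtens_unindex m).2 hs) _ _ b1 b2.
rewrite (big_nat_pair dA (xd c2 (t - n1).+1)) eqn_pair_index // => ->.
by rewrite !natr_and mulrC mulrA.
Qed.

Lemma cat_enc_iso m t : (t < n1 + n2)%N -> Defs.isometry (cat_enc c1 c2 m t).
Proof.
move=> ht; have [htn|htn] := ltnP t n1; first exact: cat_enc_iso_fst.
by apply: cat_enc_iso_snd; rewrite htn.
Qed.

Lemma cat_dec_iso_fst t : (t < n1)%N -> Defs.isometry (cat_dec c1 c2 t).
Proof.
move=> htn; apply: isometry_pairP => yy b yy' b' hyy hb hyy' hb'.
have [y1o [y2o [hy1o hy2o ->]]] := pair_indexP hyy.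
have [z1 [z2 [hz1 hz2 ->]]] := pair_indexP hyy'.
rewrite !eqn_pair_index // (big_nat_pair (catF c1 c2 t.+1) (catY c1 c2 t.+1)).
rewrite (big_nat_pair (fd c1 (minn t.+1 n1)) (fd c2 (t.+1 - n1))).
have ez1 : (t.+1 - n1 = 0)%N by apply/eqP; rewrite subn_eq0.
have ez0 : (t - n1 = 0)%N by apply/eqP; rewrite subn_eq0 ltnW.
have hy2o' : (y2o < yd c2 (t.+1 - n1))%N by rewrite ez1 -ez0.
have hF2 : fd c2 (t.+1 - n1) = 1%N by rewrite ez1 fd0.
have hf2 : (0 < fd c2 (t.+1 - n1))%N by rewrite hF2.
under eq_big_nat => f1 /andP[_ hf1].
  rewrite (big_nat_one _ hF2) (big_nat_pair (yd c1 (minn t.+1 n1)) (yd c2 (t.+1 - n1))).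
  under eq_big_nat => y1 /andP[_ hy1].
    under eq_big_nat => y2 /andP[_ hy2].
      rewrite (cat_decE_fst htn hf1 hf2 hy1 hy2 hy1o hy2o hb).
      rewrite (cat_decE_fst htn hf1 hf2 hy1 hy2 hz1 hz2 hb').
      rewrite rmorphM rmorph_nat mulrACA.
      over.
    rewrite (big_nat_delta2 _ _ hy2o').
    over.
  rewrite -mulr_suml.
  over.
rewrite -mulr_suml.
have e1 : minn t.+1 n1 = t.+1 by apply/minn_idPl.
have e0 : minn t n1 = t by apply/minn_idPl/ltnW.
rewrite e0 in hy1o hz1; rewrite e1.
have b1 : (y1o * dB + b < yd c1 t * dB)%N by apply: pair_index_lt.
have b2 : (z1 * dB + b' < yd c1 t * dB)%N by apply: pair_index_lt.
have := (isometryP _).1 (decW_iso c1 htn) _ _ b1 b2.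
rewrite (big_nat_pair (fd c1 t.+1) (yd c1 t.+1)) eqn_pair_index // => ->.
by rewrite !natr_and mulrAC.
Qed.

Lemma cat_dec_iso_snd t : (n1 <= t < n1 + n2)%N -> Defs.isometry (cat_dec c1 c2 t).
Proof.
move=> /andP [htn ht]; apply: isometry_pairP => yy b yy' b' hyy hb hyy' hb'.
have [y1o [y2o [hy1o hy2o ->]]] := pair_indexP hyy.
have [z1 [z2 [hz1 hz2 ->]]] := pair_indexP hyy'.
rewrite !eqn_pair_index // (big_nat_pair (catF c1 c2 t.+1) (catY c1 c2 t.+1)).
rewrite (big_nat_pair (fd c1 (minn t.+1 n1)) (fd c2 (t.+1 - n1))).
have e1 : minn t.+1 n1 = n1 by apply/minn_idPr/ltnW.
have e0 : minn t n1 = n1 by apply/minn_idPr.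
have hy1o' : (y1o < yd c1 (minn t.+1 n1))%N by move: hy1o; rewrite e1 e0.
have hF1 : fd c1 (minn t.+1 n1) = 1%N by rewrite e1 fdn.
have hf1 : (0 < fd c1 (minn t.+1 n1))%N by rewrite hF1.
rewrite (big_nat_one _ hF1).
under eq_big_nat => f2 /andP[_ hf2].
  rewrite (big_nat_pair (yd c1 (minn t.+1 n1)) (yd c2 (t.+1 - n1))).
  under eq_big_nat => y1 /andP[_ hy1].
    under eq_big_nat => y2 /andP[_ hy2].
      rewrite (cat_decE_snd htn hf1 hf2 hy1 hy2 hy1o hy2o hb).
      rewrite (cat_decE_snd htn hf1 hf2 hy1 hy2 hz1 hz2 hb').
      rewrite rmorphM rmorph_nat mulrACA.
      over.
    rewrite -mulr_suml.
    over.
  rewrite (big_nat_delta2 _ _ hy1o').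
  over.
rewrite -mulr_suml subSn //.
have hs : (t - n1 < n2)%N by rewrite ltn_subLR.
have b1 : (y2o * dB + b < yd c2 (t - n1) * dB)%N by apply: pair_index_lt.
have b2 : (z2 * dB + b' < yd c2 (t - n1) * dB)%N by apply: pair_index_lt.
have := (isometryP _).1 (decW_iso c2 hs) _ _ b1 b2.
rewrite (big_nat_pair (fd c2 (t - n1).+1) (yd c2 (t - n1).+1)) eqn_pair_index // => ->.
by rewrite !natr_and mulrC mulrA.
Qed.

Lemma cat_dec_iso t : (t < n1 + n2)%N -> Defs.isometry (cat_dec c1 c2 t).
Proof.
move=> ht; have [htn|htn] := ltnP t n1; first exact: cat_dec_iso_fst.
by apply: cat_dec_iso_snd; rewrite htn.
Qed.

Lemma cat_phiE x1 x2 f1 f2 y1 y2 :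
  (x1 < xd c1 (minn 0 n1))%N -> (x2 < xd c2 0)%N ->
  (f1 < fd c1 (minn 0 n1))%N -> (f2 < fd c2 0)%N ->
  (y1 < yd c1 (minn 0 n1))%N -> (y2 < yd c2 0)%N ->
  ent (cat_phi c1 c2)
    (((x1 * xd c2 0 + x2) * catF c1 c2 0 + (f1 * fd c2 0 + f2)) * catY c1 c2 0
       + (y1 * yd c2 0 + y2)) 0 =
  ent (phi c1) ((x1 * fd c1 (minn 0 n1) + f1) * yd c1 (minn 0 n1) + y1) 0 *
  ent (phi c2) ((x2 * fd c2 0 + f2) * yd c2 0 + y2) 0.
Proof.
move=> hx1 hx2 hf1 hf2 hy1 hy2.
rewrite ent_mkmx; last 2 first.
- by apply: pair_index_lt; [apply: pair_index_lt; apply: pair_index_lt|apply: pair_index_lt].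
- by [].
by rewrite /idx_hi /idx_lo !pair_index_divn ?pair_index_modn ?pair_index_divn ?pair_index_modn //; apply: pair_index_lt.
Qed.

Lemma cat_phi_iso : Defs.isometry (cat_phi c1 c2).
Proof.
apply/isometryP => j j'; rewrite !ltnS !leqn0 => /eqP -> /eqP ->.
rewrite (big_nat_pair (catX c1 c2 0 * catF c1 c2 0) (catY c1 c2 0)).
rewrite (big_nat_pair (catX c1 c2 0) (catF c1 c2 0)) eqxx.
have e : minn 0 n1 = 0%N by apply/minn_idPl.
have hF1 : fd c1 (minn 0 n1) = 1%N by rewrite e fd0.
have hF1' : (0 < fd c1 (minn 0 n1))%N by rewrite hF1.
have hF2' : (0 < fd c2 0)%N by rewrite fd0.
rewrite (big_nat_pair (xd c1 (minn 0 n1)) (xd c2 0)).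
under eq_big_nat => x1 /andP[_ hx1] do under eq_big_nat => x2 /andP[_ hx2] do
  rewrite (big_nat_pair (fd c1 (minn 0 n1)) (fd c2 0)) (big_nat_one _ hF1) (big_nat_one _ (fd0 c2))
    (big_nat_pair (yd c1 (minn 0 n1)) (yd c2 0)).
under eq_big_nat => x1 /andP[_ hx1] do under eq_big_nat => x2 /andP[_ hx2] do
  under eq_big_nat => y1 /andP[_ hy1] do under eq_big_nat => y2 /andP[_ hy2] do
  rewrite (cat_phiE hx1 hx2 hF1' hF2' hy1 hy2) rmorphM mulrACA.
rewrite e.
under eq_big_nat => x1 _ do rewrite exchange_big.
under eq_big_nat => x1 _ do under eq_big_nat => y1 _ do under eq_big_nat => x2 _ do rewrite -mulr_sumr.
under eq_big_nat => x1 _ do under eq_big_nat => y1 _ do rewrite -mulr_sumr.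
under eq_big_nat => x1 _ do rewrite -mulr_suml.
by rewrite -mulr_suml !phi_norm mulr1.
Qed.

End ConcatenationIsometry.

Section SliceEntries.
Variable C : numClosedFieldType.

Lemma slice_inner_ent dA dB n M (c : fcode C dA dB n M) m m' Es Fs l l' :
  (adjmx (slice (branch c m Es n) l) *m slice (branch c m' Fs n) l') 0 0 =
  \sum_(0 <= y < yd c n) (ent (branch c m Es n) (l * yd c n + y) 0)^* *
                         ent (branch c m' Fs n) (l' * yd c n + y) 0.
Proof.
rewrite mxE big_mkord; apply: eq_bigr=> y _.
rewrite adjmxE !mxE.
by rewrite -(entE (branch c m Es n) (mxtens_index (l, y)) 0)
           -(entE (branch c m' Fs n) (mxtens_index (l', y)) 0).
Qed.

Lemma orth_branches_ent dA dB n M (c : fcode C dA dB n M) S : orth_branches c S ->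
  forall m m', m != m' -> forall Es Fs,
  (forall t, (t < n)%N -> S (Es t)) -> (forall t, (t < n)%N -> S (Fs t)) ->
  forall l l', (l < xd c n * fd c n)%N -> (l' < xd c n * fd c n)%N ->
  \sum_(0 <= y < yd c n) (ent (branch c m Es n) (l * yd c n + y) 0)^* *
                         ent (branch c m' Fs n) (l' * yd c n + y) 0 = 0.
Proof.
move=> hZ m m' nm Es Fs hE hF l l' hl hl'.
have := hZ m m' nm Es Fs hE hF (Ordinal hl) (Ordinal hl').
by move/(congr1 (fun A : 'M[C]_1 => A 0 0)); rewrite slice_inner_ent mxE.
Qed.

End SliceEntries.

Section CatCode.
Variable C : numClosedFieldType.
Variables (dA dB n1 n2 M1 M2 : nat) (c1 : fcode C dA dB n1 M1) (c2 : fcode C dA dB n2 M2).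

Lemma cat_fd0 : catF c1 c2 0 = 1%N.
Proof. by rewrite /catF (minn_idPl (leq0n _)) !fd0. Qed.

Lemma cat_fdn : catF c1 c2 (n1 + n2) = 1%N.
Proof. by rewrite /catF (minn_idPr (leq_addr _ _)) addKn !fdn. Qed.

Definition cat_code : fcode C dA dB (n1 + n2) (M1 * M2) :=
  @FCode C dA dB (n1 + n2) (M1 * M2) (catX c1 c2) (catY c1 c2) (catF c1 c2)
    cat_fd0 cat_fdn (cat_phi c1 c2) (cat_phi_iso c1 c2)
    (cat_enc c1 c2) (fun m t h => cat_enc_iso c1 c2 m h)
    (cat_dec c1 c2) (fun t h => cat_dec_iso c1 c2 h).

Section CatBranch.
Variables (m : 'I_(M1 * M2)) (Es : nat -> 'M[C]_(dB, dA)).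
Local Notation m1 := (mxtens_unindex m).1.
Local Notation m2 := (mxtens_unindex m).2.
Local Notation Es2 := (fun s => Es (s + n1)%N).

(* At time t the concatenated code has run c1 for min(t, n1) rounds and c2 for
   t - n1 rounds, and its state is the product of the two states. *)
Definition branch_factors t := forall x1 x2 f1 f2 y1 y2,
  (x1 < xd c1 (minn t n1))%N -> (x2 < xd c2 (t - n1))%N ->
  (f1 < fd c1 (minn t n1))%N -> (f2 < fd c2 (t - n1))%N ->
  (y1 < yd c1 (minn t n1))%N -> (y2 < yd c2 (t - n1))%N ->
  ent (branch cat_code m Es t)
    (((x1 * xd c2 (t - n1) + x2) * catF c1 c2 t + (f1 * fd c2 (t - n1) + f2)) * catY c1 c2 t
       + (y1 * yd c2 (t - n1) + y2)) 0 =
  ent (branch c1 m1 Es (minn t n1)) ((x1 * fd c1 (minn t n1) + f1) * yd c1 (minn t n1) + y1) 0 *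
  ent (branch c2 m2 Es2 (t - n1)) ((x2 * fd c2 (t - n1) + f2) * yd c2 (t - n1) + y2) 0.

Lemma branch_factorsS_fst t : (t < n1)%N -> branch_factors t -> branch_factors t.+1.
Proof.
move=> ht IH x1 x2 f1 f2 y1 y2 hx1 hx2 hf1 hf2 hy1 hy2.
have e1 : minn t.+1 n1 = t.+1 by apply/minn_idPl.
have e0 : minn t n1 = t by apply/minn_idPl/ltnW.
have z1 : (t.+1 - n1 = 0)%N by apply/eqP; rewrite subn_eq0.
have z0 : (t - n1 = 0)%N by apply/eqP; rewrite subn_eq0 ltnW.
have hF2 : fd c2 (t - n1) = 1%N by rewrite z0 fd0.
have f20 : f2 = 0%N by move: hf2; rewrite z1 fd0; case: f2.
have hxx : (x1 * xd c2 (t.+1 - n1) + x2 < xd cat_code t.+1)%N by apply: pair_index_lt.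
have hff : (f1 * fd c2 (t.+1 - n1) + f2 < fd cat_code t.+1)%N by apply: pair_index_lt.
have hyy : (y1 * yd c2 (t.+1 - n1) + y2 < yd cat_code t.+1)%N by apply: pair_index_lt.
rewrite branchS [LHS](round_entE (cd := cat_code) _ _ _ hxx hff hyy).
rewrite (big_nat_pair (yd c1 (minn t n1)) (yd c2 (t - n1))).
under eq_big_nat => y1o /andP[_ hy1o].
  under eq_big_nat => y2o /andP[_ hy2o].
    under eq_big_nat => b /andP[_ hb].
      rewrite (cat_decE_fst ht hf1 hf2 hy1 hy2 hy1o hy2o hb).
      under eq_big_nat => a /andP[_ ha].
        rewrite (big_nat_pair (xd c1 (minn t n1) * xd c2 (t - n1)) (fd c1 (minn t n1) * fd c2 (t - n1))).
        rewrite (big_nat_pair (xd c1 (minn t n1)) (xd c2 (t - n1))).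
        under eq_big_nat => x1o /andP[_ hx1o].
          under eq_big_nat => x2o /andP[_ hx2o].
            rewrite (big_nat_pair (fd c1 (minn t n1)) (fd c2 (t - n1))).
            under eq_big_nat => f1o /andP[_ hf1o].
              rewrite (big_nat_one _ hF2).
              have hf2o : (0 < fd c2 (t - n1))%N by rewrite hF2.
              rewrite (cat_encE_fst _ ht ha hx1 hx2 hx1o hx2o hf1o hf2o).
              rewrite (IH _ _ _ _ _ _ hx1o hx2o hf1o hf2o hy1o hy2o).
              over.
            over.
          over.
        over.
      over.
    over.
  over.
rewrite e1 z1 in hx1 hf1 hy1 hx2 hy2 *; rewrite e0 z0 /=.
rewrite (round_entE (cd := c1) _ _ _ hx1 hf1 hy1) f20.
rewrite [RHS]mulr_suml; apply: eq_big_nat => y1o /andP[_ hy1o].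
rewrite exchange_big [RHS]mulr_suml; apply: eq_big_nat => b /andP[_ hb] /=.
under eq_big_nat => y2o _ do rewrite mulrAC.
rewrite (big_nat_delta_r _ hy2) -mulrA; congr (_ * _).
rewrite [RHS]mulr_suml; apply: eq_big_nat => a /andP[_ ha].
rewrite -mulrA; congr (_ * _).
rewrite (big_nat_pair (xd c1 t) (fd c1 t)) [RHS]mulr_suml.
apply: eq_big_nat => x1o /andP[_ hx1o].
under eq_big_nat => x2o _ do under eq_big_nat => f1o _ do rewrite mulrAC.
under eq_big_nat => x2o _ do rewrite -mulr_suml.
rewrite (big_nat_delta_r _ hx2) [RHS]mulr_suml.
apply: eq_big_nat => f1o _; by rewrite !mulrA.
Qed.

Lemma branch_factorsS_snd t : (n1 <= t)%N -> branch_factors t -> branch_factors t.+1.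
Proof.
move=> ht IH x1 x2 f1 f2 y1 y2 hx1 hx2 hf1 hf2 hy1 hy2.
have e1 : minn t.+1 n1 = n1 by apply/minn_idPr/ltnW.
have e0 : minn t n1 = n1 by apply/minn_idPr.
have z1 : (t.+1 - n1 = (t - n1).+1)%N by rewrite subSn.
have hF1 : fd c1 (minn t n1) = 1%N by rewrite e0 fdn.
have f10 : f1 = 0%N by move: hf1; rewrite e1 fdn; case: f1.
have hxx : (x1 * xd c2 (t.+1 - n1) + x2 < xd cat_code t.+1)%N by apply: pair_index_lt.
have hff : (f1 * fd c2 (t.+1 - n1) + f2 < fd cat_code t.+1)%N by apply: pair_index_lt.
have hyy : (y1 * yd c2 (t.+1 - n1) + y2 < yd cat_code t.+1)%N by apply: pair_index_lt.
rewrite branchS [LHS](round_entE (cd := cat_code) _ _ _ hxx hff hyy).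
rewrite (big_nat_pair (yd c1 (minn t n1)) (yd c2 (t - n1))).
under eq_big_nat => y1o /andP[_ hy1o].
  under eq_big_nat => y2o /andP[_ hy2o].
    under eq_big_nat => b /andP[_ hb].
      rewrite (cat_decE_snd ht hf1 hf2 hy1 hy2 hy1o hy2o hb).
      under eq_big_nat => a /andP[_ ha].
        rewrite (big_nat_pair (xd c1 (minn t n1) * xd c2 (t - n1)) (fd c1 (minn t n1) * fd c2 (t - n1))).
        rewrite (big_nat_pair (xd c1 (minn t n1)) (xd c2 (t - n1))).
        under eq_big_nat => x1o /andP[_ hx1o].
          under eq_big_nat => x2o /andP[_ hx2o].
            rewrite (big_nat_pair (fd c1 (minn t n1)) (fd c2 (t - n1))).
            rewrite (big_nat_one _ hF1).
            have hf1o : (0 < fd c1 (minn t n1))%N by rewrite hF1.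
            under eq_big_nat => f2o /andP[_ hf2o].
              rewrite (cat_encE_snd _ ht ha hx1 hx2 hx1o hx2o hf1o hf2o).
              rewrite (IH _ _ _ _ _ _ hx1o hx2o hf1o hf2o hy1o hy2o).
              over.
            over.
          over.
        over.
      over.
    over.
  over.
rewrite e1 z1 in hx1 hf1 hy1 hx2 hf2 hy2 *; rewrite e0 /=.
rewrite (round_entE (cd := c2) _ _ _ hx2 hf2 hy2) f10 (subnK ht).
under eq_big_nat => y1o _ do under eq_big_nat => y2o _ do
  under eq_big_nat => b _ do rewrite mulrAC.
under eq_big_nat => y1o _ do under eq_big_nat => y2o _ do rewrite -mulr_suml.
under eq_big_nat => y1o _ do rewrite -mulr_suml.
rewrite (big_nat_delta_r _ hy1).
rewrite [RHS]mulr_sumr; apply: eq_big_nat => y2o /andP[_ hy2o].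
rewrite [RHS]mulr_sumr; apply: eq_big_nat => b /andP[_ hb] /=.
rewrite mulrCA; congr (_ * _).
rewrite [RHS]mulr_sumr; apply: eq_big_nat => a /andP[_ ha].
rewrite mulrCA; congr (_ * _).
under eq_big_nat => x1o _ do under eq_big_nat => x2o _ do
  under eq_big_nat => f2o _ do rewrite mulrAC.
under eq_big_nat => x1o _ do under eq_big_nat => x2o _ do rewrite -mulr_suml.
under eq_big_nat => x1o _ do rewrite -mulr_suml.
rewrite (big_nat_delta_r _ hx1).
rewrite (big_nat_pair (xd c2 (t - n1)) (fd c2 (t - n1))) [RHS]mulr_sumr.
apply: eq_big_nat => x2o _; rewrite [RHS]mulr_sumr.
apply: eq_big_nat => f2o _; by rewrite mulrCA.
Qed.

Lemma branch_factors0 : branch_factors 0.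
Proof.
move=> x1 x2 f1 f2 y1 y2 hx1 hx2 hf1 hf2 hy1 hy2.
rewrite /= ent_mkmx; last 2 first.
- by apply: pair_index_lt; [apply: pair_index_lt; apply: pair_index_lt|apply: pair_index_lt].
- by [].
rewrite /idx_hi /idx_lo !pair_index_divn ?pair_index_modn ?pair_index_divn ?pair_index_modn //; try by apply: pair_index_lt.
have e : minn 0 n1 = 0%N by apply/minn_idPl.
by rewrite e.
Qed.

Lemma cat_branchE t : branch_factors t.
Proof.
elim: t => [|t IH]; first exact: branch_factors0.
case: (ltnP t n1)=> ht; [exact: branch_factorsS_fst|exact: branch_factorsS_snd].
Qed.

End CatBranch.

Lemma cat_code_zero_error k (E : 'I_k -> 'M[C]_(dB, dA)) :
  zero_error E c1 -> zero_error E c2 -> zero_error E cat_code.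
Proof.
move=> /zero_error_orth_branchesP hZ1 /zero_error_orth_branchesP hZ2; apply/zero_error_orth_branchesP.
move=> m m' nm Es Fs hE hF l l'; apply/matrixP=> i j; rewrite !ord1 [RHS]mxE slice_inner_ent.
have [xx [ff [hxx hff ->]]] := pair_indexP (ltn_ord l).
have [x1 [x2 [hx1 hx2 ->]]] := pair_indexP hxx.
have [f1 [f2 [hf1 hf2 ->]]] := pair_indexP hff.
have [xx' [ff' [hxx' hff' ->]]] := pair_indexP (ltn_ord l').
have [z1 [z2 [hz1 hz2 ->]]] := pair_indexP hxx'.
have [g1 [g2 [hg1 hg2 ->]]] := pair_indexP hff'.
rewrite (big_nat_pair (yd c1 (minn (n1 + n2) n1)) (yd c2 (n1 + n2 - n1))).
under eq_big_nat => y1 /andP[_ hy1] do under eq_big_nat => y2 /andP[_ hy2] do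
  rewrite (cat_branchE m Es hx1 hx2 hf1 hf2 hy1 hy2) (cat_branchE m' Fs hz1 hz2 hg1 hg2 hy1 hy2)
    rmorphM mulrACA.
under eq_big_nat => y1 _ do rewrite -mulr_sumr.
rewrite -mulr_suml.
have e1 : minn (n1 + n2) n1 = n1 by apply/minn_idPr; rewrite leq_addr.
have e2 : (n1 + n2 - n1 = n2)%N by rewrite addKn.
rewrite e1 e2 in hx1 hx2 hf1 hf2 hz1 hz2 hg1 hg2 *.
have fst Gs : (forall t, (t < n1 + n2)%N -> exists j, Gs t = E j) ->
    forall t, (t < n1)%N -> exists j, Gs t = E j.
  by move=> hG t ht; apply: hG; exact: leq_trans ht (leq_addr _ _).
have snd Gs : (forall t, (t < n1 + n2)%N -> exists j, Gs t = E j) ->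
    forall t, (t < n2)%N -> exists j, Gs (t + n1)%N = E j.
  by move=> hG t ht; apply: hG; rewrite addnC ltn_add2l.
have : mxtens_unindex m != mxtens_unindex m'.
  by apply: contra nm => /eqP h; apply/eqP; apply: (can_inj (@mxtens_unindexK _ _)).
rewrite xpair_eqE negb_and => /orP [n1m|n2m].
  by rewrite (orth_branches_ent hZ1 n1m (fst _ hE) (fst _ hF)) ?mul0r //; apply: pair_index_lt.
by rewrite (orth_branches_ent hZ2 n2m (snd _ hE) (snd _ hF)) ?mulr0 //; apply: pair_index_lt.
Qed.

End CatCode.

Section ZeroErrorCodes.
Variable C : numClosedFieldType.

Definition zero_error_code dA dB k (E : 'I_k -> 'M[C]_(dB, dA)) n M :=
  exists c : fcode C dA dB n M, zero_error E c.

Lemma zero_error_code_cat dA dB k (E : 'I_k -> 'M[C]_(dB, dA)) n1 n2 M1 M2 :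
  zero_error_code E n1 M1 -> zero_error_code E n2 M2 -> zero_error_code E (n1 + n2) (M1 * M2).
Proof.
by move=> [c1 h1] [c2 h2]; exists (cat_code c1 c2); apply: cat_code_zero_error.
Qed.

Lemma embed_isometry P Q : (Q <= P)%N ->
  Defs.isometry (mkmx P Q (fun i j => ((i == j)%N)%:R : C)).
Proof.
move=> hQP; apply/isometryP => j j' hj hj'.
have hjP : (j < P)%N by apply: leq_trans hj hQP.
rewrite -(big_nat_delta_l (fun i => ((i == j')%N)%:R : C) hjP).
apply: eq_big_nat=> i /andP[_ hi]; rewrite !ent_mkmx // eq_sym.
by case: (j == i)%N; rewrite ?rmorph1 ?rmorph0 ?mul1r ?mul0r.
Qed.

(* One message, no memory on Alice's side, and Bob simply stores all the
   channel outputs: Y_t = B^(x)t. *)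
Lemma zero_error_code1 dA dB k (E : 'I_k -> 'M[C]_(dB, dA)) n :
  (0 < dA)%N -> zero_error_code E n 1.
Proof.
move=> dA0.
have hU (m : 'I_1) t : (t < n)%N ->
    Defs.isometry (mkmx (dA * 1) (1 * 1) (fun i j => ((i == j)%N)%:R : C)).
  by move=> _; apply: embed_isometry; rewrite !muln1.
have hW t : (t < n)%N ->
    Defs.isometry (mkmx (1 * dB ^ t.+1) (dB ^ t * dB) (fun i j => ((i == j)%N)%:R : C)).
  by move=> _; apply: embed_isometry; rewrite mul1n expnSr.
exists (@FCode C dA dB n 1 (fun _ => 1%N) (fun t => dB ^ t)%N (fun _ => 1%N) erefl erefl
   _ (embed_isometry (leqnn 1)) (fun _ _ => _) hU _ hW).
by move=> m m'; rewrite !ord1.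
Qed.

Lemma fcode_input_dim_gt0 dA dB n M (c : fcode C dA dB n.+1 M) : (0 < M)%N -> (0 < dA)%N.
Proof.
move=> M0; rewrite lt0n; apply/negP => dA0.
have XF0 : (0 < xd c 0 * fd c 0)%N.
  rewrite lt0n; apply/negP => /eqP XF0.
  have := (isometryP _).1 (phi_unit c) 0%N 0%N isT isT.
  by rewrite big_geq ?XF0 ?mul0n // => /esym/eqP; rewrite oner_eq0.
have := (isometryP _).1 (encU_iso c (Ordinal M0) (ltn0Sn n)) 0%N 0%N XF0 XF0.
rewrite big_geq; last by rewrite leqn0 muln_eq0 dA0.
by move=> /esym/eqP; rewrite oner_eq0.
Qed.

End ZeroErrorCodes.

(** * Convergence of the zero-error rates *)

Section Fekete.
Variable R : realType.

Lemma ln2_gt0 : (0 : R) < ln 2.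
Proof. by apply: ln_gt0; rewrite ltr1n. Qed.

Lemma elog2_ge (a : R) X : 0 < a -> (a%:E <= X)%E -> ((ln a / ln 2)%:E <= elog2 X)%E.
Proof.
case: X => [x| |] //= a0 ax; last by rewrite leey.
rewrite lee_fin in ax; have x0 : 0 < x by apply: lt_le_trans ax.
by rewrite x0 lee_fin ler_pM2r ?invr_gt0 ?ln2_gt0 // ler_ln ?posrE.
Qed.

Lemma elog2_gt (x : R) Y : (x%:E < elog2 Y)%E -> ((expR (x * ln 2))%:E < Y)%E.
Proof.
case: Y => [y| |] /=; [|by move=> _; exact: ltry|by []].
case: ifP => // y0; rewrite !lte_fin => h.
rewrite -[X in _ < X](lnK (x := y)) ?posrE // ltr_expR.
by rewrite -ltr_pdivlMr ?ln2_gt0.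
Qed.

(* Blocks of length p.+1 fill n.+1 up to a remainder of at most p, so the
   averaged rate tends to L / p.+1. *)
Lemma blocks_rate_near (x L : R) p : 0 <= L -> x * p.+1%:R < L ->
  (\forall n \near \oo, x < (n.+1 %/ p.+1)%:R * L / n.+1%:R)%classic.
Proof.
move=> L0 xL; set K := (p.+1%:R * L) / (L - x * p.+1%:R).
have d0 : 0 < L - x * p.+1%:R by rewrite subr_gt0.
have K0 : 0 <= K by rewrite divr_ge0 ?mulr_ge0 // ltW.
exists (Num.Def.archi_bound K) => // n /= hn.
rewrite ltr_pdivlMr ?ltr0n //; set q := (n.+1 %/ p.+1)%N.
have hq : (n.+1%:R : R) < q%:R * p.+1%:R + p.+1%:R.
  by rewrite -natrM -natrD ltr_nat {1}(divn_eq n.+1 p.+1) ltn_add2l ltn_mod.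
have : K < n.+1%:R.
  by apply: lt_le_trans (archi_boundP K0) _; rewrite ler_nat; exact: leqW.
rewrite /K ltr_pdivrMr // => hK.
have p0 : (0 : R) < p.+1%:R by rewrite ltr0n.
rewrite -(ltr_pM2r p0); nra.
Qed.

Variable P : nat -> nat -> Prop.
Hypothesis P_cat : forall n1 n2 M1 M2, P n1 M1 -> P n2 M2 -> P (n1 + n2)%N (M1 * M2)%N.
Hypothesis P_one : forall p M, P p.+1 M -> (0 < M)%N -> forall n, P n 1%N.

Definition max_msgs n : \bar R := ereal_sup [set (M%:R)%:E | M in [set M : nat | P n M]].
Definition rate (n : nat) : \bar R := (elog2 (max_msgs n.+1) * (n.+1%:R^-1)%:E)%E.

Lemma max_msgs_ge n M : P n M -> ((M%:R)%:E <= max_msgs n)%E.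
Proof. by move=> h; apply: ereal_sup_ubound; exists M. Qed.

Lemma P_blocks p M : P p.+1 M -> (0 < M)%N -> forall N, P N (M ^ (N %/ p.+1)).
Proof.
move=> hM M0; have Pq q : P (q * p.+1) (M ^ q).
  elim: q=> [|q IH]; first exact: P_one hM M0 _.
  by rewrite mulSnr expnSr; apply: P_cat.
move=> N; rewrite {1}(divn_eq N p.+1) -[(M ^ _)%N]muln1.
exact: P_cat (Pq _) (P_one hM M0 _).
Qed.

Lemma rate_ge_blocks p M : P p.+1 M -> (0 < M)%N -> forall n,
  (((n.+1 %/ p.+1)%:R * (ln M%:R / ln 2) / n.+1%:R)%:E <= rate n)%E.
Proof.
move=> hM M0 n; rewrite /rate EFinM; apply: lee_wpmul2r; first by rewrite lee_fin invr_ge0.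
have hM' : (0 : R) < (M ^ (n.+1 %/ p.+1))%:R by rewrite ltr0n expn_gt0 M0.
apply: le_trans (elog2_ge hM' (max_msgs_ge (P_blocks hM M0 n.+1))).
by rewrite lee_fin natrX lnXn ?ltr0n // mulrA mulr_natl.
Qed.

Lemma rate_near_gt (x : R) : (x%:E < ereal_sup (range rate))%E ->
  (\forall n \near \oo, (x%:E < rate n)%E)%classic.
Proof.
move=> /ereal_sup_gt [_ [p _ <-]]; rewrite /rate => xp.
have : ((x * p.+1%:R)%:E < elog2 (max_msgs p.+1))%E.
  have p0 : (0 : R) < p.+1%:R by rewrite ltr0n.
  move: xp; case: (elog2 (max_msgs p.+1)) => [z| |] //=.
  - by rewrite -EFinM !lte_fin -ltr_pdivlMr.
  - by rewrite ltry.
  - by rewrite mulNyr gtr0_sg ?invr_gt0 // mul1e.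
move=> /elog2_gt /ereal_sup_gt [_ [M hM <-]]; rewrite lte_fin => hMe.
have M0 : (0 < M)%N by rewrite -(ltr0n R); apply: lt_trans hMe; exact: expR_gt0.
have L0 : (0 : R) <= ln M%:R / ln 2 by rewrite divr_ge0 ?ln_ge0 ?ler1n // ltW // ln2_gt0.
have xL : x * p.+1%:R < ln M%:R / ln 2.
  rewrite ltr_pdivlMr ?ln2_gt0 // -(expRK (x * p.+1%:R * ln 2)).
  by rewrite ltr_ln ?posrE ?expR_gt0 ?ltr0n.
apply: filterS (blocks_rate_near L0 xL) => n xn.
by apply: lt_le_trans (rate_ge_blocks hM M0 n); rewrite lte_fin.
Qed.

Lemma rate_cvg_sup : (rate @ \oo --> ereal_sup (range rate))%classic.
Proof.
have rate_le n : (rate n <= ereal_sup (range rate))%E.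
  by apply: ereal_sup_ubound; exists n.
move: rate_le rate_near_gt; set S := ereal_sup (range rate).
case: S => [l| |] rate_le near_gt.
- apply/fine_cvgP; split.
    apply: filterS (near_gt (l - 1) _); last by rewrite lte_fin ltrBlDr ltrDl.
    move=> n hn; rewrite fin_numElt (lt_trans _ hn) ?ltNyr //=.
    by apply: le_lt_trans (rate_le n) _; rewrite ltry.
  apply/cvgrPdist_lt => e e0.
  apply: filterS (near_gt (l - e) _); last by rewrite lte_fin ltrBlDr ltrDl.
  move=> n /=; have := rate_le n; case: (rate n) => [z| |] //=.
  rewrite lee_fin lte_fin => hz hn.
  by rewrite ger0_norm ?subr_ge0 // ltrBlDr -ltrBlDl.
- by apply/cvgeyPgt => A; apply: near_gt; rewrite ltry.
- have -> : rate = fun _ => -oo%E.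
    by apply: funext => n; apply/eqP; rewrite -leeNy_eq rate_le.
  exact: cvg_cst.
Qed.

End Fekete.

Theorem proposition1 (C : numClosedFieldType) (R : realType) (dA dB k k' : nat)
    (E : 'I_k -> 'M[C]_(dB, dA)) (E' : 'I_k' -> 'M[C]_(dB, dA)) :
  is_channel E -> is_channel E' ->
  (kraus_mx E == kraus_mx E')%MS ->
  (forall (n M : nat) (c : fcode C dA dB n M), zero_error E c <-> zero_error E' c) /\
  (forall n : nat, Mf R E n = Mf R E' n) /\
  C0EF R E = C0EF R E' /\
  (rate_seq R E @ \oo --> C0EF R E)%classic.
Proof.
move=> _ _ /andP [sEE' sE'E].
have zeroE n M (c : fcode C dA dB n M) : zero_error E c <-> zero_error E' c.
  by split; apply: zero_error_kraus_submx.
have MfE n : Mf R E n = Mf R E' n.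
  rewrite /Mf; congr ereal_sup; apply/seteqP.
  by split=> _ [M [c /zeroE hc] <-]; exists M => //; exists c.
have rateE : rate_seq R E = rate_seq R E' by apply: funext => n; rewrite /rate_seq MfE.
do 3!split=> //; first by rewrite /C0EF rateE.
apply: (@rate_cvg_sup R (zero_error_code E)); first exact: zero_error_code_cat.
by move=> p M [c _] M0 n; apply: zero_error_code1; exact: fcode_input_dim_gt0 c M0.
Qed.
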